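(* Let $a,b$ be independent indeterminates over $\mathbb Q$ and $\mathbb Q_{a,b}:=\mathbb Q(a,b)$. The point $P_0=(-4db,\,4d^2)$ lies on $E_{a,b}$ and has infinite order in the Mordell–Weil group $E_{a,b}(\mathbb Q_{a,b})$.
   Context: $d=d(a,b):=-4b^3+(a^2-30a+1)b^2+2a(3a+1)(4a-7)b-a(4a^4-4a^3-40a^2+91a-4)$. $E_{a,b}$ is the elliptic curve over $\mathbb Q(a,b)$ given by $y^2=x^3+d(a^2-30a+1)x^2-8d^2a(3a+1)(4a-7)x-16d^3a(4a^4-4a^3-40a^2+91a-4)$. *)

From HB Require Import structures.
From mathcomp Require Import all_boot all_order all_algebra.
Set Implicit Arguments. Unset Strict Implicit. Unset Printing Implicit Defensive.
Import Order.TTheory GRing.Theory Num.Theory.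
Local Open Scope ring_scope.

(* Points of a Weierstrass curve y^2 = x^3 + a2 x^2 + a4 x + a6 over a field K:
   None is the point at infinity O, Some (x, y) an affine point. *)
Definition on_curve (K : fieldType) (a2 a4 a6 : K) (P : option (K * K)) : bool :=
  if P is Some (x, y) then y ^+ 2 == x ^+ 3 + a2 * x ^+ 2 + a4 * x + a6 else true.

(* The chord-tangent group law (neutral element O = None).  It does not
   involve a6, which is nevertheless kept as a parameter for uniformity. *)
Definition ec_add (K : fieldType) (a2 a4 a6 : K) (P Q : option (K * K)) : option (K * K) :=
  match P, Q with
  | None, _ => Q
  | _, None => P
  | Some (x1, y1), Some (x2, y2) =>
      if (x1 == x2) && (y1 == - y2) then None
      else
        let l := if x1 == x2 then (3%:R * x1 ^+ 2 + 2%:R * a2 * x1 + a4) / (2%:R * y1)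
                 else (y2 - y1) / (x2 - x1) in
        let x3 := l ^+ 2 - a2 - x1 - x2 in
        Some (x3, - (y1 + l * (x3 - x1)))
  end.

Definition ec_mul (K : fieldType) (a2 a4 a6 : K) (n : nat) (P : option (K * K)) : option (K * K) :=
  iter n (ec_add a2 a4 a6 P) None.

Definition infinite_order (K : fieldType) (a2 a4 a6 : K) (P : option (K * K)) : Prop :=
  forall n : nat, (0 < n)%N -> ec_mul a2 a4 a6 n P <> None.

(* Q(a,b) = fraction field of Q[a][b]; a and b independent indeterminates. *)
Notation Qab := {fraction {poly {poly rat}}} (only parsing).
Definition ta : Qab := tofrac (('X : {poly rat})%:P).
Definition tb : Qab := tofrac ('X : {poly {poly rat}}).

Definition dab (a b : Qab) : Qab :=
  - 4%:R * b ^+ 3 + (a ^+ 2 - 30%:R * a + 1) * b ^+ 2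
  + 2%:R * a * (3%:R * a + 1) * (4%:R * a - 7%:R) * b
  - a * (4%:R * a ^+ 4 - 4%:R * a ^+ 3 - 40%:R * a ^+ 2 + 91%:R * a - 4%:R).

Definition d : Qab := dab ta tb.
Definition E_a2 : Qab := d * (ta ^+ 2 - 30%:R * ta + 1).
Definition E_a4 : Qab := - 8%:R * d ^+ 2 * ta * (3%:R * ta + 1) * (4%:R * ta - 7%:R).
Definition E_a6 : Qab :=
  - 16%:R * d ^+ 3 * ta *
    (4%:R * ta ^+ 4 - 4%:R * ta ^+ 3 - 40%:R * ta ^+ 2 + 91%:R * ta - 4%:R).

Definition P0 : option (Qab * Qab) := Some (- 4%:R * d * tb, 4%:R * d ^+ 2).

(* Proof strategy: a degree argument at b = oo.  Write K = Frac(Q[a][b]) and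
   measure elements of K by their degree in b: [deg_le f n] says f = p/q with
   deg_b p - deg_b q <= n, and [approx f c n] says f = c b^n + (lower order)
   with c a constant.  On a Weierstrass curve with
   deg a2 <= 3 and deg a4 <= 7, for points (x, y) with x ~ X b^4, y ~ Y b^6,
   the chord-tangent law reduces at leading order to the chord-tangent law of
   the cuspidal cubic y^2 = x^3 (LeadingPoints).  On that cubic t |-> (t^-2, t^-3)
   turns addition of parameters into the group law (CuspidalCubic), so in
   characteristic 0 the k-th multiple of such a point has leading coefficients
   ((k t)^-2, (k t)^-3) and is never the point at infinity (InfiniteOrder).
   For E_{a,b} we have d = -4 b^3 + O(b^2), hence deg a2 = 3, deg a4 = 6 and
   P0 ~ (16 b^4, 64 b^6) with 64^2 = 16^3; that P0 lies on the curve is a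
   polynomial identity. *)

From HB Require Import structures.
From mathcomp Require Import all_boot all_order all_algebra.
From mathcomp Require Import ring zify.
Set Implicit Arguments. Unset Strict Implicit. Unset Printing Implicit Defensive.
Import GRing.Theory Num.Theory.
Local Open Scope ring_scope.
Local Notation "x %:F" := (tofrac x).

(* Degree bounds in the fraction field R(X) of a univariate polynomial ring. *)

Section DegreeBound.
Context {R : idomainType}.
Local Notation K := {fraction {poly R}}.

(* f has degree at most n: f = p/q with deg p - deg q <= n.  For f = 0 this
   holds for every n, since the denominator may be taken of large degree. *)
Definition deg_le (f : K) (n : int) : Prop :=
  exists p q : {poly R},
    [/\ q != 0, f * q%:F = p%:F & (size p)%:Z <= (size q)%:Z + n].

Lemma deg_le_weaken f m n : deg_le f m -> m <= n -> deg_le f n.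
Proof. by case=> p [q [q0 fq hs]] mn; exists p, q; split=> //; lia. Qed.

Lemma deg_le0 n : deg_le 0 n.
Proof.
exists 0, 'X^`|n|; rewrite mul0r rmorph0 size_poly0 size_polyXn monic_neq0 ?monicXn //.
by split=> //; lia.
Qed.

Lemma deg_le_poly p : deg_le p%:F ((size p)%:Z - 1).
Proof. by exists p, 1; rewrite oner_neq0 rmorph1 mulr1 size_poly1; split=> //; lia. Qed.

(* Over the common denominator q1 q2 both numerators p_i q_j stay of degree
   at most deg (q1 q2) + n. *)
Lemma deg_le_add f g n : deg_le f n -> deg_le g n -> deg_le (f + g) n.
Proof.
case=> p1 [q1 [q10 fq pq]] [p2 [q2 [q20 gq pq2]]].
exists (p1 * q2 + p2 * q1), (q1 * q2); split; first by rewrite mulf_neq0.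
  by rewrite rmorphD !rmorphM /= -fq -gq; ring.
have q1pos : (0 < size q1)%N by rewrite size_poly_gt0.
have q2pos : (0 < size q2)%N by rewrite size_poly_gt0.
rewrite (size_mul q10 q20).
have := size_polyD (p1 * q2) (p2 * q1).
set s := size (p1 * q2 + p2 * q1); set s12 := size (p1 * q2); set s21 := size (p2 * q1).
have : (s12 <= (size p1 + size q2).-1)%N by apply: size_polyMleq.
have : (s21 <= (size p2 + size q1).-1)%N by apply: size_polyMleq.
lia.
Qed.

Lemma deg_le_add_max f g m n : deg_le f m -> deg_le g n -> deg_le (f + g) (Num.max m n).
Proof.
move=> fm gn; apply: deg_le_add; [apply: deg_le_weaken fm _ | apply: deg_le_weaken gn _]; lia.
Qed.

Lemma deg_le_opp f n : deg_le f n -> deg_le (- f) n.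
Proof.
case=> p [q [q0 fq pq]]; exists (- p), q.
by rewrite size_polyN rmorphN /= -fq mulNr.
Qed.

(* Degrees add; the zero cases are set aside first, since only nonzero
   numerators have additive size. *)
Lemma deg_le_mul f g m n : deg_le f m -> deg_le g n -> deg_le (f * g) (m + n).
Proof.
have [-> _ _|f0] := eqVneq f 0; first by rewrite mul0r; apply: deg_le0.
have [-> _ _|g0] := eqVneq g 0; first by rewrite mulr0; apply: deg_le0.
case=> p1 [q1 [q10 fq pq]] [p2 [q2 [q20 gq pq2]]].
have num_neq0 (h : K) p q : h != 0 -> q != 0 -> h * q%:F = p%:F -> p != 0.
  by move=> h0 q0 hq; rewrite -tofrac_eq0 -hq mulf_neq0 ?tofrac_eq0.
exists (p1 * p2), (q1 * q2); split; first by rewrite mulf_neq0.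
  by rewrite !rmorphM /= -fq -gq; ring.
have p10 := num_neq0 _ _ _ f0 q10 fq; have p20 := num_neq0 _ _ _ g0 q20 gq.
have p1pos : (0 < size p1)%N by rewrite size_poly_gt0.
have p2pos : (0 < size p2)%N by rewrite size_poly_gt0.
rewrite (size_mul q10 q20) (size_mul p10 p20).
lia.
Qed.

Lemma deg_le_exp f n k : deg_le f n -> deg_le (f ^+ k) (k%:Z * n).
Proof.
move=> fn; elim: k => [|k IH].
  have := deg_le_poly (1 : {poly R}); rewrite rmorph1 size_poly1 expr0.
  by move/deg_le_weaken; apply; lia.
by rewrite exprS; apply: deg_le_weaken (deg_le_mul fn IH) _; lia.
Qed.

Lemma deg_le_const r : deg_le (r%:P)%:F 0.
Proof. by apply: deg_le_weaken (deg_le_poly _) _; have := size_polyC_leq1 r; lia. Qed.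

Lemma deg_le_nat k : deg_le k%:R 0.
Proof.
have -> : k%:R = ((k%:R)%:P)%:F :> K by rewrite polyC_natr rmorph_nat.
exact: deg_le_const.
Qed.

Lemma deg_le_X : deg_le 'X%:F 1.
Proof. by apply: deg_le_weaken (deg_le_poly _) _; rewrite size_polyX. Qed.

End DegreeBound.

Section LeadingTerm.
Context {F : fieldType}.
Local Notation K := {fraction {poly {poly F}}}.

Definition lc : F -> K := @tofrac _ \o polyC \o polyC.
HB.instance Definition _ := GRing.RMorphism.on lc.

(* f = c X^n + (terms of degree < n); c = 0 is allowed. *)
Definition approx (f : K) (c : F) (n : nat) : Prop :=
  deg_le (f - lc c * 'X%:F ^+ n) (n%:Z - 1).

Lemma deg_le_monomial c n : deg_le (lc c * 'X%:F ^+ n) n.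
Proof.
apply: deg_le_weaken (deg_le_mul (deg_le_const _) (deg_le_exp n deg_le_X)) _.
lia.
Qed.

Lemma approx_deg f c n : approx f c n -> deg_le f n.
Proof.
move=> fc; rewrite -(subrK (lc c * 'X%:F ^+ n) f).
apply: deg_le_add (deg_le_monomial c n); apply: deg_le_weaken fc _; lia.
Qed.

Lemma approx_of_deg f n : deg_le f (n%:Z - 1) -> approx f 0 n.
Proof. by rewrite /approx rmorph0 mul0r subr0. Qed.

Lemma approx_nat k : approx k%:R k%:R 0.
Proof. by rewrite /approx rmorph_nat expr0 mulr1 subrr; apply: deg_le0. Qed.

Lemma approx_X : approx 'X%:F 1 1.
Proof. by rewrite /approx rmorph1 mul1r expr1 subrr; apply: deg_le0. Qed.

Lemma approx_add f g c e n : approx f c n -> approx g e n -> approx (f + g) (c + e) n.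
Proof.
rewrite /approx rmorphD => fc ge.
have -> : f + g - (lc c + lc e) * 'X%:F ^+ n
        = (f - lc c * 'X%:F ^+ n) + (g - lc e * 'X%:F ^+ n) by ring.
exact: deg_le_add.
Qed.

Lemma approx_opp f c n : approx f c n -> approx (- f) (- c) n.
Proof.
rewrite /approx rmorphN => fc.
have -> : - f - - lc c * 'X%:F ^+ n = - (f - lc c * 'X%:F ^+ n) by ring.
exact: deg_le_opp.
Qed.

Lemma approx_sub f g c e n : approx f c n -> approx g e n -> approx (f - g) (c - e) n.
Proof. by move=> fc ge; apply: approx_add fc (approx_opp ge). Qed.

Lemma approx_mul f g c e m n :
  approx f c m -> approx g e n -> approx (f * g) (c * e) (m + n).
Proof.
move=> fc ge; rewrite /approx rmorphM exprD.
have -> : f * g - lc c * lc e * ('X%:F ^+ m * 'X%:F ^+ n) =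
   (f - lc c * 'X%:F ^+ m) * g + (lc c * 'X%:F ^+ m) * (g - lc e * 'X%:F ^+ n) by ring.
apply: deg_le_add.
- by apply: deg_le_weaken (deg_le_mul fc (approx_deg ge)) _; lia.
- by apply: deg_le_weaken (deg_le_mul (deg_le_monomial c m) ge) _; lia.
Qed.

(* A nonzero leading coefficient makes f nonzero, and then f^-1 has degree -n:
   g q = e X^n q + p with deg p < n + deg q. *)
Lemma approx_inv g e n :
  approx g e n -> e != 0 -> g != 0 /\ deg_le g^-1 (- n%:Z).
Proof.
case=> p [q [q0 gq pq]] e0.
have q_pos : (0 < size q)%N by rewrite size_poly_gt0.
have size_p : (size p < n + size q)%N by lia.
set h := (e%:P)%:P * ('X^n * q) + p.
have ghq : g * q%:F = h%:F.
  by rewrite rmorphD !rmorphM rmorphXn /= -gq; rewrite /lc /=; ring.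
have size_h : size h = (n + size q)%N.
  have size_lead : size ((e%:P)%:P * ('X^n * q)) = (n + size q)%N.
    by rewrite size_Cmul ?polyC_eq0 // mulrC size_mulXn.
  by rewrite /h size_polyDl size_lead.
have h0 : h != 0 by rewrite -size_poly_eq0 size_h; lia.
have g0 : g != 0.
  by apply: contra_neq h0 => g0; apply/eqP; rewrite -tofrac_eq0 -ghq g0 mul0r.
split=> //; exists q, h; split=> //; last by rewrite size_h; lia.
by rewrite -ghq mulrA mulVf // mul1r.
Qed.

Lemma approx_neq f g c e n : approx f c n -> approx g e n -> c != e -> f != g.
Proof.
move=> fc ge ce; rewrite -subr_eq0.
by have [] := approx_inv (approx_sub fc ge); rewrite subr_eq0.
Qed.

Lemma quotient_error (L : fieldType) (f g c e u v : L) : e != 0 -> g != 0 ->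
  f / g - c / e * u = (e * (f - c * (u * v)) - c * u * (g - e * v)) / e / g.
Proof. by move=> e0 g0; field; rewrite e0 g0. Qed.

Lemma approx_div f g c e m n : approx f c m -> approx g e n -> e != 0 -> (n <= m)%N ->
  approx (f / g) (c / e) (m - n).
Proof.
move=> fc ge e0 nm; have [g0 g_inv] := approx_inv ge e0.
have lce0 : lc e != 0 by rewrite fmorph_eq0.
rewrite /approx rmorphM fmorphV.
set k := (m - n)%N; set X := 'X%:F.
have Xm : X ^+ m = X ^+ k * X ^+ n by rewrite -exprD subnK.
rewrite (quotient_error _ _ _ (X ^+ n) lce0 g0) -Xm.
have lce_inv : deg_le (lc e)^-1 0 by rewrite -fmorphV; apply: deg_le_const.
have num : deg_le (lc e * (f - lc c * X ^+ m) - lc c * X ^+ k * (g - lc e * X ^+ n))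
                  (m%:Z - 1).
  apply: deg_le_add.
    by apply: deg_le_weaken (deg_le_mul (deg_le_const _) fc) _; lia.
  apply: deg_le_opp; apply: deg_le_weaken (deg_le_mul (deg_le_monomial c k) ge) _.
  by rewrite /k; lia.
by apply: deg_le_weaken (deg_le_mul (deg_le_mul num lce_inv) g_inv) _; rewrite /k; lia.
Qed.

End LeadingTerm.

Section LeadingPoints.
Context {F : fieldType}.
Local Notation K := {fraction {poly {poly F}}}.
Variables a2 a4 a6 : K.

Definition leads (P : option (K * K)) (Q : option (F * F)) : Prop :=
  match P, Q with
  | Some (x, y), Some (X, Y) => approx x X 4 /\ approx y Y 6
  | _, _ => False
  end.

Hypothesis deg_a2 : deg_le a2 3.

(* a2 does not contribute to the b^4 term of a sum. *)
Lemma approx_a2 : approx a2 0 4.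
Proof. exact: approx_of_deg. Qed.

Lemma leads_chord P1 P2 Q1 Q2 :
  leads P1 Q1 -> leads P2 Q2 -> omap fst Q1 != omap fst Q2 ->
  leads (ec_add a2 a4 a6 P1 P2) (ec_add 0 0 0 Q1 Q2).
Proof.
case: P1 Q1 => [[x1 y1]|] [[X1 Y1]|] //= [hx1 hy1].
case: P2 Q2 => [[x2 y2]|] [[X2 Y2]|] //= [hx2 hy2] hX.
have {}hX : X1 != X2 by apply: contra_neq hX => ->.
rewrite (negbTE hX) (negbTE (approx_neq hx1 hx2 hX)) /=.
have dX : X2 - X1 != 0 by rewrite subr_eq0 eq_sym.
have hl := approx_div (approx_sub hy2 hy1) (approx_sub hx2 hx1) dX isT.
have hx3 := approx_sub (approx_sub (approx_sub (approx_mul hl hl) approx_a2) hx1) hx2.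
rewrite !expr2; split; first exact: hx3.
exact/approx_opp/(approx_add hy1)/(approx_mul hl (approx_sub hx3 hx1)).
Qed.

Hypothesis deg_a4 : deg_le a4 7.

Lemma leads_tangent P Q : leads P Q -> ec_add 0 0 0 Q Q != None ->
  leads (ec_add a2 a4 a6 P P) (ec_add 0 0 0 Q Q).
Proof.
case: P Q => [[x y]|] [[X Y]|] //= [hx hy].
rewrite !eqxx /=; have [//|hY _] := eqVneq Y (- Y).
rewrite (negbTE (approx_neq hy (approx_opp hy) hY)) /=.
have hnum : approx (3%:R * x ^+ 2 + 2%:R * a2 * x + a4) (3%:R * X ^+ 2 + 2%:R * 0 * X + 0) 8.
  rewrite !expr2; apply: approx_add; first apply: approx_add.
  - exact: approx_mul (approx_nat 3) (approx_mul hx hx).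
  - exact: approx_mul (approx_mul (approx_nat 2) approx_a2) hx.
  - exact: approx_of_deg.
have hden : approx (2%:R * y) (2%:R * Y) 6 by exact: approx_mul (approx_nat 2) hy.
have hY2 : 2%:R * Y != 0 by rewrite mulr_natl mulr2n addr_eq0.
have hl := approx_div hnum hden hY2 isT.
have hx3 := approx_sub (approx_sub (approx_sub (approx_mul hl hl) approx_a2) hx) hx.
rewrite !expr2 in hx3 *; split; first exact: hx3.
exact/approx_opp/(approx_add hy)/(approx_mul hl (approx_sub hx3 hx)).
Qed.

End LeadingPoints.

(* The nonsingular points of the cuspidal cubic y^2 = x^3 form the additive
   group, parametrised by t |-> (t^-2, t^-3). *)
Section CuspidalCubic.
Context {F : fieldType}.

Definition cusp_pt (t : F) : option (F * F) := Some (t ^- 2, t ^- 3).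

Lemma cusp_chord s t : s != 0 -> t != 0 -> s + t != 0 -> s ^+ 2 != t ^+ 2 ->
  ec_add 0 0 0 (cusp_pt s) (cusp_pt t) = cusp_pt (s + t).
Proof.
move=> s0 t0 st0 s2t2; rewrite /ec_add /cusp_pt (inj_eq invr_inj) (negbTE s2t2) /=.
by congr (Some (_, _)); field; rewrite mulN1r subr_eq0 s0 t0 st0 s2t2.
Qed.

Lemma cusp_tangent t : 2%:R != 0 :> F -> t != 0 ->
  ec_add 0 0 0 (cusp_pt t) (cusp_pt t) = cusp_pt (t + t).
Proof.
move=> two0 t0; rewrite /ec_add /cusp_pt eqxx /=.
have double_neq0 (u : F) : u != 0 -> u + u != 0.
  by move=> u0; rewrite -mulr2n -mulr_natl mulf_neq0.
have -> : (t ^- 3 == - t ^- 3) = false.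
  by apply/negbTE; rewrite -addr_eq0 double_neq0 // invr_eq0 expf_neq0.
by congr (Some (_, _)); field; rewrite double_neq0 // t0 two0.
Qed.

End CuspidalCubic.

Section InfiniteOrder.
Context {F : numFieldType}.
Local Notation K := {fraction {poly {poly F}}}.
Variables a2 a4 a6 : K.
Hypotheses (deg_a2 : deg_le a2 3) (deg_a4 : deg_le a4 7).

(* Leading terms of kP: the multiple k t of the parameter; for k >= 2 the
   parameters t and k t have distinct x-coordinates t^-2 <> (k t)^-2. *)
Lemma leads_ec_mul P t : t != 0 -> leads P (cusp_pt t) ->
  forall k, leads (ec_mul a2 a4 a6 k.+1 P) (cusp_pt (k.+1%:R * t)).
Proof.
move=> t0 Pt.
have mul1 : ec_mul a2 a4 a6 1 P = P by case: P Pt => [[]|].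
have two0 : 2%:R != 0 :> F by rewrite pnatr_eq0.
elim=> [|k IH]; first by rewrite mul1 mul1r.
rewrite /ec_mul iterS -/(ec_mul a2 a4 a6 k.+1 P).
case: k IH => [|k] IH.
  rewrite mul1 mulr_natl mulr2n -cusp_tangent //.
  by apply: leads_tangent => //; rewrite cusp_tangent.
have k3t : k.+3%:R * t = t + k.+2%:R * t by rewrite -{2}(mul1r t) -mulrDl -natr1 addrC.
have k3t0 : k.+3%:R * t != 0 by rewrite mulf_neq0 ?pnatr_eq0.
have kt0 : k.+2%:R * t != 0 by rewrite mulf_neq0 ?pnatr_eq0.
have t2 : t ^+ 2 != (k.+2%:R * t) ^+ 2.
  rewrite exprMn -{1}(mul1r (t ^+ 2)) (inj_eq (mulIf _)) ?expf_neq0 //.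
  by rewrite -natrX eq_sym pnatr_eq1; lia.
rewrite k3t -cusp_chord -?k3t //.
by apply: leads_chord => //=; apply: contra_neq t2 => -[/invr_inj].
Qed.

(* The parameter of (X, Y) is t = X / Y. *)
Theorem leads_infinite_order P X Y :
  leads P (Some (X, Y)) -> Y != 0 -> Y ^+ 2 = X ^+ 3 -> infinite_order a2 a4 a6 P.
Proof.
move=> PXY Y0 YX.
have X0 : X != 0.
  by apply: contra_neq Y0 => X0; apply/eqP; rewrite -sqrf_eq0 YX X0 expr0n.
have cusp_XY : Some (X, Y) = cusp_pt (X / Y).
  rewrite /cusp_pt !expr_div_n !invf_div; congr (Some (_, _)).
  - by rewrite YX; field; rewrite X0.
  - by rewrite -YX; field; rewrite Y0.
rewrite cusp_XY in PXY; have t0 : X / Y != 0 by rewrite mulf_neq0 ?invr_eq0.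
by case=> [//|k] _; have := leads_ec_mul t0 PXY k; case: ec_mul.
Qed.

End InfiniteOrder.

Ltac deg_infer :=
  lazymatch goal with
  | |- deg_le (_ + _) _ => eapply deg_le_add_max; [deg_infer | deg_infer]
  | |- deg_le (- _) _ => eapply deg_le_opp; deg_infer
  | |- deg_le (_ * _) _ => eapply deg_le_mul; [deg_infer | deg_infer]
  | |- deg_le (_ ^+ _) _ => eapply deg_le_exp; deg_infer
  | |- deg_le 1 _ => exact: (deg_le_nat 1)
  | |- _ => first [eassumption | exact: deg_le_X | exact: deg_le_nat | exact: deg_le_const]
  end.

Ltac deg_bound := eapply deg_le_weaken; [deg_infer | lia].

Lemma approx_d : approx d (- 4%:R) 3.
Proof.
rewrite /approx rmorphN rmorph_nat; change ('X%:F) with tb.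
have -> : d - - 4%:R * tb ^+ 3 = (ta ^+ 2 - 30%:R * ta + 1) * tb ^+ 2
    + 2%:R * ta * (3%:R * ta + 1) * (4%:R * ta - 7%:R) * tb
    - ta * (4%:R * ta ^+ 4 - 4%:R * ta ^+ 3 - 40%:R * ta ^+ 2 + 91%:R * ta - 4%:R).
  by rewrite /d /dab; ring.
rewrite /ta /tb; deg_bound.
Qed.

Lemma deg_E_a2 : deg_le E_a2 3.
Proof. have := approx_deg approx_d; rewrite /E_a2 /ta => dd; deg_bound. Qed.

Lemma deg_E_a4 : deg_le E_a4 7.
Proof. have := approx_deg approx_d; rewrite /E_a4 /ta => dd; deg_bound. Qed.

Lemma leads_P0 : leads P0 (Some (16%:R, 64%:R)).
Proof.
split.
- have -> : 16%:R = - 4%:R * - 4%:R * 1 :> rat by rewrite mulr1 mulrNN -natrM.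
  exact: approx_mul (approx_mul (approx_opp (approx_nat 4)) approx_d) approx_X.
- have -> : 64%:R = 4%:R * (- 4%:R * - 4%:R) :> rat by rewrite mulrNN -!natrM.
  by rewrite expr2; exact: approx_mul (approx_nat 4) (approx_mul approx_d approx_d).
Qed.

(* P0 satisfies the curve equation exactly because d = d(a, b). *)
Lemma P0_on_curve : on_curve E_a2 E_a4 E_a6 P0.
Proof.
have curve_eq (D a b : Qab) :
  (4%:R * D ^+ 2) ^+ 2 - ((- 4%:R * D * b) ^+ 3
     + D * (a ^+ 2 - 30%:R * a + 1) * (- 4%:R * D * b) ^+ 2
     + - 8%:R * D ^+ 2 * a * (3%:R * a + 1) * (4%:R * a - 7%:R) * (- 4%:R * D * b)
     + - 16%:R * D ^+ 3 * a * (4%:R * a ^+ 4 - 4%:R * a ^+ 3 - 40%:R * a ^+ 2 + 91%:R * a - 4%:R))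
  = 16%:R * D ^+ 3 * (D - dab a b).
  by rewrite /dab; ring.
by rewrite /on_curve /P0 -subr_eq0 curve_eq /d subrr mulr0.
Qed.

Theorem mainTheorem6 :
  on_curve E_a2 E_a4 E_a6 P0 /\ infinite_order E_a2 E_a4 E_a6 P0.
Proof.
split; first exact: P0_on_curve.
apply: (leads_infinite_order deg_E_a2 deg_E_a4 leads_P0).
- by rewrite pnatr_eq0.
- by rewrite -!natrX.
Qed.
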